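(* Let $\mathrm A$ be a nontrivial system of Bilocal Classical Theory (BCT) and $\rho=\sum_ip_i|i)_{\mathrm A}$ a deterministic state. For every $N$ and every channel $\mathcal C\in\mathsf{Tr}_1(\mathrm A^{\boxtimes N}\to\mathrm A^{\boxtimes N})$ define \[ \tilde D(\rho^{\boxtimes N},\mathcal C)=\sum_{\mathbf i,\mathbf s}\frac{1}{2^{N-1}}p_{\mathbf i}\,\big\|\big((\mathcal C-\mathcal I_{\mathrm A^{\boxtimes N}})\boxtimes\mathcal I_{\mathrm A^{\boxtimes N}}\big)|(\mathbf i_{\mathbf s}\mathbf i_{\mathbf s})_+)_{\mathrm A^{\boxtimes N}\mathrm A^{\boxtimes N}}\big\|_{\rm op}, \] with $p_{\mathbf i}=p_{i_1}\cdots p_{i_N}$, and let $\tilde I(\rho)$ be defined exactly as the information content $I(\rho)$ but with $D(\rho^{\boxtimes N},\mathcal D\mathcal E)$ replaced by $\tilde D(\rho^{\boxtimes N},\mathcal D\mathcal E)$ in the definition of compression schemes. Then $I(\rho)=\tilde I(\rho)$.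
   Context: BCT is an operational probabilistic theory with the following structure. Systems: a trivial system $\mathrm I$ and, for every integer $D>1$, exactly one system of size $D$. For a nontrivial system $\mathrm A$ of size $D_{\mathrm A}$, every state is a nonnegative combination $\sum_ip_i|i)_{\mathrm A}$ of the $D_{\mathrm A}$ pure states, which are the vertices of the simplex of deterministic states and are jointly perfectly discriminable; each system has a unique deterministic effect $e_{\mathrm A}$ with $(e_{\mathrm A}|i)=1$. For nontrivial $\mathrm A,\mathrm B$, the composite $\mathrm{AB}$ has size $2D_{\mathrm A}D_{\mathrm B}$ and pure states $|(ij)_s)_{\mathrm{AB}}$, $s\in\{+,-\}$, with $|i)_{\mathrm A}\boxtimes|j)_{\mathrm B}=\tfrac12\sum_{s=\pm}|(ij)_s)_{\mathrm{AB}}$ and $((ij)_{s_1}k)_{s_2}=(i(jk)_{s_1s_2})_{s_1}$. Transformations act linearly; channels $\mathcal C\in\mathsf{Tr}_1(\mathrm E\to\mathrm F)$ are exactly those for which for each $j$ there is a probability distribution $\{\lambda^{(j)}_{m\tau}\}$ over $(m,\tau)\in\{1,\dots,D_{\mathrm F}\}\times\{\pm\}$ with $(\mathcal I_{\mathrm A}\boxtimes\mathcal C)|(ij)_s)_{\mathrm{AE}}=\sum_{m,\tau}\lambda^{(j)}_{m\tau}|(im)_{\tau s})_{\mathrm{AF}}$ for every system $\mathrm A$. The system $\mathrm A^{\boxtimes N}=(\cdots((\mathrm A_1\mathrm A_2)\mathrm A_3)\cdots)\mathrm A_N$ (copies of $\mathrm A$) has pure states $|\mathbf i_{\mathbf s})$,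 $\mathbf i\in\{1,\dots,D_{\mathrm A}\}^N$, $\mathbf s\in\{\pm\}^{N-1}$, and $\rho^{\boxtimes N}=\sum_{\mathbf i,\mathbf s}p_{\mathbf i}2^{-(N-1)}|\mathbf i_{\mathbf s})$; $|(\mathbf i_{\mathbf s}\mathbf i_{\mathbf s})_+)$ is the pure state of $\mathrm A^{\boxtimes N}\mathrm A^{\boxtimes N}$ with both component labels $\mathbf i_{\mathbf s}$ and sign $+$. The bibit $\mathrm B$ is the system of size 2. Information content: a dilation of a state $\sigma$ of $\mathrm X$ is a state $\Psi$ of $\mathrm{XE}$ with $(\mathcal I_{\mathrm X}\boxtimes e_{\mathrm E})\Psi=\sigma$; a refinement of $\Psi$ is a finite collection of states from a common preparation test summing to $\Psi$. The operational norm is $\|\delta\|_{\rm op}=\sup_{\{a_0,a_1\}}(a_0-a_1|\delta)$ over binary observation tests (in BCT, the $\ell^1$-norm of the coefficients of $\delta$ in the pure-state basis). $D(\rho^{\boxtimes N},\mathcal C)=\sup_\Psi\sup_{\{\Gamma_i\}}\sum_i\|(\mathcal C\boxtimes\mathcal I_{\mathrm E})\Gamma_i-\Gamma_i\|_{\rm op}$ over dilations $\Psi$ of $\rho^{\boxtimes N}$ and refinements $\{\Gamma_i\}$ of $\Psi$. With $E_{N,M,\varepsilon}(\rho)$ the set of channel pairs $\mathcal E\in\mathsf{Tr}_1(\mathrm A^{\boxtimes N}\to\mathrm B^{\boxtimes M})$, $\mathcal D\in\mathsf{Tr}_1(\mathrm B^{\boxtimes M}\to\mathrm A^{\boxtimes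 N})$ with $D(\rho^{\boxtimes N},\mathcal D\mathcal E)<\varepsilon$, set $R_{N,\varepsilon}(\rho)=\min\{M:E_{N,M,\varepsilon}(\rho)\ne\emptyset\}/N$ and $I(\rho)=\lim_{\varepsilon\to0}\limsup_{N\to\infty}R_{N,\varepsilon}(\rho)$. *)

From HB Require Import structures.
From mathcomp Require Import all_boot all_order all_algebra.
From mathcomp Require Import all_classical all_reals all_analysis.
Set Implicit Arguments. Unset Strict Implicit. Unset Printing Implicit Defensive.
Import Order.TTheory GRing.Theory Num.Theory.
Local Open Scope classical_set_scope.
Local Open Scope ring_scope.

(* Conventions.
   - A nontrivial BCT system is described by the finite type X labelling its
     pure states; a state is its coefficient vector X -> R in the pure-state
     basis (a state iff all coefficients are >= 0).
   - Sign labels s in {+,-} are booleans, true = +, and the product of signs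
     is [sgn_mul t s] (i.e. + * + = +, - * - = +, ...).
   - A composite XE (E nontrivial, labels Y) has pure states |(x e)_s),
     labelled by X * Y * bool.
   - A channel X -> Y is given by its coefficients C x m t = lambda^{(x)}_{m t},
     a probability distribution over (m,t) for each x. *)

Definition sgn_mul (t s : bool) : bool := t == s.

Section BCT.
Variable R : realType.

Definition is_state (X : finType) (v : X -> R) := forall x, 0 <= v x.

Definition is_channel (X Y : finType) (C : X -> Y -> bool -> R) :=
  (forall x m t, 0 <= C x m t) /\ (forall x, \sum_(m : Y) \sum_(t : bool) C x m t = 1).

Definition id_ch (X : finType) : X -> X -> bool -> R :=
  fun x m t => if (m == x) && t then 1 else 0.

Definition comp_ch (X Y Z : finType) (Dc : Y -> Z -> bool -> R)
  (Ec : X -> Y -> bool -> R) : X -> Z -> bool -> R :=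
  fun x z t => \sum_(y : Y) \sum_(t1 : bool) \sum_(t2 : bool | sgn_mul t2 t1 == t)
                 Ec x y t1 * Dc y z t2.

Definition apply_ch (X Y : finType) (C : X -> Y -> bool -> R) (v : X -> R) : Y -> R :=
  fun m => \sum_(x : X) \sum_(t : bool) v x * C x m t.

(* action of C (x) I_E on the composite XE:
   (C (x) I_E)|(x e)_s) = sum_{m,t} lambda^{(x)}_{m t} |(m e)_{t s}) *)
Definition apply_ch_tens_id (X Y E : finType) (C : X -> Y -> bool -> R)
  (G : X * E * bool -> R) : Y * E * bool -> R :=
  fun k => let: (m, e, s') := k in
    \sum_(x : X) \sum_(s : bool) \sum_(t : bool | sgn_mul t s == s')
       G (x, e, s) * C x m t.

(* marginal (I_X (x) e_E) on XE, using (e_E| e) = 1 and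
   |x) (x) |e) = 1/2 sum_s |(x e)_s) *)
Definition marg (X E : finType) (G : X * E * bool -> R) : X -> R :=
  fun x => \sum_(e : E) \sum_(s : bool) G (x, e, s).

(* operational norm = l1 norm of the coefficients in the pure-state basis *)
Definition opnorm (X : finType) (v : X -> R) : R := \sum_(x : X) `|v x|.

Definition vsub (X : finType) (v w : X -> R) : X -> R := fun x => v x - w x.

(* D(sigma, C): sup over dilations Psi of sigma (in XE, E trivial or of any
   size d > 1) and refinements {Gamma_i} of Psi (finite families of states
   summing to Psi) of  sum_i || (C (x) I_E) Gamma_i - Gamma_i ||_op . *)
Definition D_err (X : finType) (sigma : X -> R) (C : X -> X -> bool -> R) : R :=
  sup [set r : R |
    (* trivial environment: XI = X *)
    (exists (Psi : X -> R) (G : seq (X -> R)),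
        Psi = sigma /\
        (forall g, g \in G -> is_state g) /\
        (forall x, \sum_(g <- G) g x = Psi x) /\
        r = \sum_(g <- G) opnorm (vsub (apply_ch C g) g))
    \/
    (exists (d : nat) (Psi : X * 'I_d * bool -> R) (G : seq (X * 'I_d * bool -> R)),
        (1 < d)%N /\ is_state Psi /\ marg Psi = sigma /\
        (forall g, g \in G -> is_state g) /\
        (forall k, \sum_(g <- G) g k = Psi k) /\
        r = \sum_(g <- G) opnorm (vsub (apply_ch_tens_id C g) g))].

Definition pure_diag (X : finType) (x : X) : X * X * bool -> R :=
  fun k => let: (a, b, s) := k in if (a == x) && (b == x) && s then 1 else 0.

(* tilde D(sigma, C) = sum_x sigma_x || ((C - I) (x) I_X) |(x x)_+) ||_op ;
   for sigma = rho^{(x)N}, sigma_{(i,s)} = 2^{-(N-1)} p_i. *)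
Definition D_tilde (X : finType) (sigma : X -> R) (C : X -> X -> bool -> R) : R :=
  \sum_(x : X) sigma x *
     opnorm (vsub (apply_ch_tens_id C (pure_diag x))
                  (apply_ch_tens_id (@id_ch X) (pure_diag x))).

(* pure-state labels of A^{(x)N} for N = n.+1 and A of size D:
   (i, s) with i in {1..D}^N and s in {+-}^(N-1) *)
Definition Aidx (D n : nat) : finType :=
  ({ffun 'I_n.+1 -> 'I_D} * {ffun 'I_n -> bool})%type.

Definition rhoN (D : nat) (p : 'I_D -> R) (n : nat) : Aidx D n -> R :=
  fun k => (\prod_(j < n.+1) p (k.1 j)) / 2 ^+ n.

Definition err_fun := forall X : finType, (X -> R) -> (X -> X -> bool -> R) -> R.

(* E_{N,M,eps}(rho) <> empty, with N = n.+1, M = m.+1, B the bibit (size 2) *)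
Definition schemes_exist (err : err_fun) (D : nat) (p : 'I_D -> R)
  (n m : nat) (eps : R) : Prop :=
  exists (Ec : Aidx D n -> Aidx 2 m -> bool -> R)
         (Dc : Aidx 2 m -> Aidx D n -> bool -> R),
    is_channel Ec /\ is_channel Dc /\
    err (Aidx D n) (@rhoN D p n) (comp_ch Dc Ec) < eps.

Definition rate (err : err_fun) (D : nat) (p : 'I_D -> R) (eps : R) (n : nat) : \bar R :=
  ereal_inf [set ((m.+1)%:R / (n.+1)%:R)%:E | m in [set m | schemes_exist err p n m eps]].

Definition info (err : err_fun) (D : nat) (p : 'I_D -> R) : \bar R :=
  lim ((fun eps : R => limn_esup (rate err p eps)) @ 0^'+).

End BCT.

(* Both error measures equal the sigma-weighted distance of the channel from
   the identity, sum_x sigma_x ||C|x) - |x)||, computed on the coefficients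
   lambda^{(x)}_{m t}.  For D_tilde this is a direct computation on the pure
   states |(x x)_+).  For D_err, linearity and the triangle inequality bound
   the contribution of every state of a refinement by its weighted distance,
   and the refinement of the dilation sigma (x) |0)_+ into the pure pieces
   sigma_x |(x 0)_+) attains the bound.  Hence the two notions of
   compression scheme coincide, and so do I and I~. *)

From HB Require Import structures.
From mathcomp Require Import all_boot all_order all_algebra.
From mathcomp Require Import all_classical all_reals all_analysis.
Import Order.TTheory GRing.Theory Num.Theory.
Set Implicit Arguments.
Unset Strict Implicit.
Unset Printing Implicit Defensive.
Local Open Scope ring_scope.

Section ChannelDistance.
Variable R : realType.

Lemma sup_eq_max (A : set R) x : A x -> ubound A x -> sup A = x.
Proof.
move=> Ax ubx; apply/eqP; rewrite eq_le ge_sup; [|by exists x|by []].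
by apply: ub_le_sup => //; exists x.
Qed.

Lemma sum_sgn_mul (F : bool -> R) s s' :
  \sum_(t | sgn_mul t s == s') F t = F (s' == s).
Proof.
by rewrite big_mkcond big_bool /sgn_mul; case: s; case: s'; rewrite /= ?addr0 ?add0r.
Qed.

Lemma sum_sgn_flip (F : bool -> R) s : \sum_(s' : bool) F (s' == s) = \sum_t F t.
Proof. by rewrite !big_bool; case: s; rewrite //= addrC. Qed.

Lemma sum_triple (X Y : finType) (F : X * Y * bool -> R) :
  \sum_k F k = \sum_x \sum_y \sum_s F (x, y, s).
Proof. by rewrite !pair_bigA; apply: eq_bigr => -[[]]. Qed.

Lemma ler_norm_wsum2 (I J : finType) (w f : I -> J -> R) :
  (forall i j, 0 <= w i j) ->
  `|\sum_i \sum_j w i j * f i j| <= \sum_i \sum_j w i j * `|f i j|.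
Proof.
move=> w_ge0; apply: (le_trans (ler_norm_sum _ _ _)); apply: ler_sum => i _.
apply: (le_trans (ler_norm_sum _ _ _)); apply: ler_sum => j _.
by rewrite normrM ger0_norm.
Qed.

Definition ch_dist (X Y : finType) (C C' : X -> Y -> bool -> R) (x : X) : R :=
  \sum_m \sum_t `|C x m t - C' x m t|.

Lemma apply_chB (X Y : finType) (C C' : X -> Y -> bool -> R) (g : X -> R) m :
  apply_ch C g m - apply_ch C' g m = \sum_x \sum_t g x * (C x m t - C' x m t).
Proof.
rewrite -sumrB; apply: eq_bigr => x _; rewrite -sumrB.
by apply: eq_bigr => t _; rewrite mulrBr.
Qed.

Lemma apply_ch_tens_idE (X Y E : finType) (C : X -> Y -> bool -> R)
    (G : X * E * bool -> R) m e s' :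
  apply_ch_tens_id C G (m, e, s') = \sum_x \sum_s G (x, e, s) * C x m (s' == s).
Proof. by apply: eq_bigr => x _; apply: eq_bigr => s _; rewrite sum_sgn_mul. Qed.

Lemma apply_ch_tens_idB (X Y E : finType) (C C' : X -> Y -> bool -> R)
    (G : X * E * bool -> R) m e s' :
  apply_ch_tens_id C G (m, e, s') - apply_ch_tens_id C' G (m, e, s') =
  \sum_x \sum_s G (x, e, s) * (C x m (s' == s) - C' x m (s' == s)).
Proof.
rewrite !apply_ch_tens_idE -sumrB; apply: eq_bigr => x _; rewrite -sumrB.
by apply: eq_bigr => s _; rewrite mulrBr.
Qed.

Lemma sum_id_ch (X : finType) (F : X -> bool -> R) m s' :
  \sum_x \sum_s F x s * @id_ch R X x m (s' == s) = F m s'.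
Proof.
rewrite (bigD1 m) //= [X in _ + X]big1 => [|x /negPf xNm].
  by rewrite addr0 big_bool /id_ch eqxx; case: s'; rewrite /= mulr1 mulr0 ?addr0 ?add0r.
by apply: big1 => s _; rewrite /id_ch eq_sym xNm mulr0.
Qed.

Lemma apply_ch_id (X : finType) (g : X -> R) : apply_ch (@id_ch R X) g = g.
Proof. by apply/funext => m; rewrite /apply_ch (sum_id_ch (fun x _ => g x) m true). Qed.

Lemma apply_ch_tens_id_id (X E : finType) (G : X * E * bool -> R) :
  apply_ch_tens_id (@id_ch R X) G = G.
Proof.
apply/funext => -[[m e] s'].
by rewrite apply_ch_tens_idE (sum_id_ch (fun x s => G (x, e, s))).
Qed.

Lemma exchange_big2 (I J K L : finType) (F : I -> J -> K -> L -> R) :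
  \sum_i \sum_j \sum_k \sum_l F i j k l = \sum_k \sum_l \sum_i \sum_j F i j k l.
Proof.
under eq_bigr do rewrite exchange_big.
under eq_bigr do under eq_bigr do rewrite exchange_big.
by rewrite exchange_big; under eq_bigr do rewrite exchange_big.
Qed.

Lemma opnorm_apply_chB_le (X Y : finType) (C C' : X -> Y -> bool -> R) (g : X -> R) :
  is_state g ->
  opnorm (vsub (apply_ch C g) (apply_ch C' g)) <= \sum_x g x * ch_dist C C' x.
Proof.
move=> g_ge0; rewrite /opnorm /vsub.
under eq_bigr do rewrite apply_chB.
under [leRHS]eq_bigr do rewrite /ch_dist mulr_sumr.
under [leRHS]eq_bigr do under eq_bigr do rewrite mulr_sumr.
rewrite [leRHS]exchange_big; apply: ler_sum => m _.
by apply: ler_norm_wsum2 => x t; apply: g_ge0.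
Qed.

Lemma opnorm_apply_ch_tens_idB_le (X Y E : finType) (C C' : X -> Y -> bool -> R)
    (G : X * E * bool -> R) :
  is_state G ->
  opnorm (vsub (apply_ch_tens_id C G) (apply_ch_tens_id C' G)) <=
  \sum_x \sum_e \sum_s G (x, e, s) * ch_dist C C' x.
Proof.
move=> G_ge0; rewrite /opnorm /vsub sum_triple.
under eq_bigr do under eq_bigr do under eq_bigr do rewrite apply_ch_tens_idB.
under [leRHS]eq_bigr do under eq_bigr do under eq_bigr => s _ do
  (rewrite /ch_dist mulr_sumr; under eq_bigr do rewrite mulr_sumr -(sum_sgn_flip _ s)).
rewrite [leRHS]exchange_big; under [leRHS]eq_bigr do rewrite exchange_big2.
rewrite [leRHS]exchange_big; do 3!(apply: ler_sum => ? _).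
by apply: ler_norm_wsum2 => x s; apply: G_ge0.
Qed.

Definition point_state (X E : finType) (x : X) (e0 : E) (c : R) :
    X * E * bool -> R :=
  fun k => if k == (x, e0, true) then c else 0.

Lemma pure_diag_point_state (X : finType) (x : X) : pure_diag R x = point_state x x 1.
Proof.
by apply/funext => -[[a b] s]; rewrite /pure_diag /point_state !xpair_eqE eqb_id.
Qed.

Lemma sum_point_state (X E : finType) (x : X) (e0 : E) c (F : X -> bool -> R) e :
  \sum_y \sum_s point_state x e0 c (y, e, s) * F y s =
  if e == e0 then c * F x true else 0.
Proof.
rewrite (bigD1 x) //= [X in _ + X]big1 => [|y /negPf yNx].
  rewrite addr0 big_bool /point_state !xpair_eqE eqxx.
  by case: (e == e0); rewrite /= !mul0r ?addr0.
by apply: big1 => s _; rewrite /point_state !xpair_eqE yNx mul0r.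
Qed.

Lemma opnorm_apply_ch_tens_idB_point (X Y E : finType) (C C' : X -> Y -> bool -> R)
    (x : X) (e0 : E) c :
  opnorm (vsub (apply_ch_tens_id C (point_state x e0 c))
               (apply_ch_tens_id C' (point_state x e0 c))) = `|c| * ch_dist C C' x.
Proof.
rewrite /opnorm /vsub sum_triple /ch_dist mulr_sumr; apply: eq_bigr => m _.
rewrite (bigD1 e0) //= [X in _ + X]big1 => [|e /negPf eNe0]; last first.
  by apply: big1 => s' _; rewrite apply_ch_tens_idB sum_point_state eNe0 normr0.
rewrite addr0 mulr_sumr; apply: eq_bigr => s' _.
by rewrite apply_ch_tens_idB sum_point_state eqxx normrM eqb_id.
Qed.

Lemma D_tildeE (X : finType) (sigma : X -> R) (C : X -> X -> bool -> R) :
  D_tilde sigma C = \sum_x sigma x * ch_dist C (@id_ch R X) x.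
Proof.
apply: eq_bigr => x _.
by rewrite pure_diag_point_state opnorm_apply_ch_tens_idB_point normr1 mul1r.
Qed.

Lemma point_state_ge0 (X E : finType) (x : X) (e0 : E) c :
  0 <= c -> is_state (point_state x e0 c).
Proof. by move=> c_ge0 k; rewrite /point_state; case: ifP. Qed.

Lemma marg_point_state (X E : finType) (x : X) (e0 : E) c y :
  marg (point_state x e0 c) y = if x == y then c else 0.
Proof.
rewrite /marg /point_state; have [<- | xNy] := eqVneq x y; last first.
  by apply: big1 => e _; apply: big1 => s _; rewrite !xpair_eqE eq_sym (negPf xNy).
rewrite (bigD1 e0) //= [X in _ + X]big1 => [|e /negPf eNe0].
  by rewrite addr0 big_bool !xpair_eqE !eqxx /= addr0.
by apply: big1 => s _; rewrite !xpair_eqE eNe0 andbF.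
Qed.

Section RefinementBounds.
Variables (X : finType) (sigma : X -> R) (C : X -> X -> bool -> R).

Lemma sum_opnorm_refinement_le (G : seq (X -> R)) :
  (forall g, g \in G -> is_state g) -> (forall x, \sum_(g <- G) g x = sigma x) ->
  \sum_(g <- G) opnorm (vsub (apply_ch C g) g) <=
  \sum_x sigma x * ch_dist C (@id_ch R X) x.
Proof.
move=> G_state G_sum.
under [leRHS]eq_bigr do rewrite -G_sum mulr_suml.
rewrite [leRHS]exchange_big big_seq [leRHS]big_seq; apply: ler_sum => g gG.
by have := opnorm_apply_chB_le C (@id_ch R X) (G_state g gG); rewrite apply_ch_id.
Qed.

Lemma sum_opnorm_refinement_tens_le (E : finType) (Psi : X * E * bool -> R)
    (G : seq (X * E * bool -> R)) :
  marg Psi = sigma ->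
  (forall g, g \in G -> is_state g) -> (forall k, \sum_(g <- G) g k = Psi k) ->
  \sum_(g <- G) opnorm (vsub (apply_ch_tens_id C g) g) <=
  \sum_x sigma x * ch_dist C (@id_ch R X) x.
Proof.
move=> <- G_state G_sum.
under [leRHS]eq_bigr do (rewrite /marg mulr_suml; under eq_bigr do rewrite mulr_suml).
under [leRHS]eq_bigr do under eq_bigr do under eq_bigr do rewrite -G_sum mulr_suml.
under [leRHS]eq_bigr do under eq_bigr do rewrite exchange_big.
under [leRHS]eq_bigr do rewrite exchange_big.
rewrite [leRHS]exchange_big big_seq [leRHS]big_seq; apply: ler_sum => g gG.
have := opnorm_apply_ch_tens_idB_le C (@id_ch R X) (G_state g gG).
by rewrite apply_ch_tens_id_id.
Qed.

Lemma point_refinement_attains (E : finType) (e0 : E) : is_state sigma ->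
  exists (Psi : X * E * bool -> R) (G : seq (X * E * bool -> R)),
    [/\ is_state Psi, marg Psi = sigma, forall g, g \in G -> is_state g,
        forall k, \sum_(g <- G) g k = Psi k &
        \sum_(g <- G) opnorm (vsub (apply_ch_tens_id C g) g) =
        \sum_x sigma x * ch_dist C (@id_ch R X) x].
Proof.
move=> sigma_ge0; pose G := [seq point_state x e0 (sigma x) | x <- enum X].
have G_state g : g \in G -> is_state g.
  by case/mapP=> x _ ->; apply: point_state_ge0.
exists (fun k => \sum_(g <- G) g k), G; split=> //.
- by move=> k; rewrite big_seq; apply: sumr_ge0 => g /G_state.
- apply/funext => y; rewrite /marg.
  under eq_bigr do rewrite exchange_big; rewrite exchange_big /= big_map big_enum /=.
  under eq_bigr do rewrite -/(marg _ y) marg_point_state.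
  by rewrite -big_mkcond big_pred1_eq.
- rewrite big_map big_enum /=; apply: eq_bigr => x _.
  rewrite -[X in vsub _ X](apply_ch_tens_id_id (point_state x e0 (sigma x))).
  by rewrite opnorm_apply_ch_tens_idB_point ger0_norm.
Qed.

End RefinementBounds.

Lemma D_errE (X : finType) (sigma : X -> R) (C : X -> X -> bool -> R) :
  is_state sigma -> D_err sigma C = \sum_x sigma x * ch_dist C (@id_ch R X) x.
Proof.
move=> sigma_ge0; apply: sup_eq_max.
  have [Psi [G [? ? ? ? <-]]] :=
    point_refinement_attains C (ord0 : 'I_2) sigma_ge0.
  by right; exists 2%N, Psi, G.
move=> r [[Psi [G [-> [G_state [G_sum ->]]]]] |
          [? [Psi [G [_ [_ [marg_Psi [G_state [G_sum ->]]]]]]]]].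
  exact: sum_opnorm_refinement_le.
exact: sum_opnorm_refinement_tens_le marg_Psi G_state G_sum.
Qed.

Lemma rhoN_state (D : nat) (p : 'I_D -> R) n :
  (forall i, 0 <= p i) -> is_state (@rhoN R D p n).
Proof. by move=> p_ge0 k; rewrite /rhoN divr_ge0 ?exprn_ge0 ?prodr_ge0. Qed.

Lemma info_ext (err err' : err_fun R) (D : nat) (p : 'I_D -> R) :
  (forall n C, err _ (@rhoN R D p n) C = err' _ (@rhoN R D p n) C) ->
  info err p = info err' p.
Proof.
move=> err_eq; rewrite /info /rate.
suff -> : schemes_exist err p = schemes_exist err' p by [].
apply/funext => n; apply/funext => m; apply/funext => eps; apply/propext.
by split=> -[Ec [Dc [Ec_ch [Dc_ch err_lt]]]]; exists Ec, Dc; rewrite err_eq in err_lt *.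
Qed.

End ChannelDistance.

Theorem proposition2 (R : realType) (D : nat) (p : 'I_D -> R) :
  (1 < D)%N ->
  (forall i, 0 <= p i) -> \sum_(i < D) p i = 1 ->
  info (@D_err R) p = info (@D_tilde R) p.
Proof.
move=> _ p_ge0 _; apply: info_ext => n C.
by rewrite D_errE ?D_tildeE //; apply: rhoN_state.
Qed.
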